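(* Let $\mathbf{a},\mathbf{b},\mathbf{c},\mathbf{d}\in\mathcal{R}^n$ and $\mathbf{e},\mathbf{f},\mathbf{g},\mathbf{h}\in\mathcal{R}^m$. Define the $m\times n$ matrices \begin{align*} Q&=\mathbf{f}^{*t}\mathbf{a}+\mathbf{g}^t\mathbf{c}-\mathbf{e}^t\mathbf{b}^*+\mathbf{h}^t\mathbf{d},\\ R&=\mathbf{f}^{*t}\mathbf{b}+\mathbf{g}^{*t}\mathbf{d}+\mathbf{e}^t\mathbf{a}^*-\mathbf{h}^{*t}\mathbf{c},\\ S&=\mathbf{g}^{*t}\mathbf{a}-\mathbf{f}^t\mathbf{c}-\mathbf{h}^t\mathbf{b}-\mathbf{e}^t\mathbf{d}^*,\\ T&=\mathbf{g}^{t}\mathbf{b}-\mathbf{f}^t\mathbf{d}+\mathbf{h}^{*t}\mathbf{a}+\mathbf{e}^t\mathbf{c}^*. \end{align*} Then in $\mathcal{R}[x^{\pm1},y^{\pm1}]$, \[ (\psi_Q\psi_Q^*+\psi_R\psi_R^*+\psi_S\psi_S^*+\psi_T\psi_T^* )(x,y)=(\psi_{\mathbf{a}}\psi^*_{\mathbf{a}}+\psi_{\mathbf{b}}\psi^*_{\mathbf{b}}+\psi_{\mathbf{c}}\psi^*_{\mathbf{c}}+\psi_{\mathbf{d}}\psi^*_{\mathbf{d}})(x)\,(\psi_{\mathbf{e}}\psi^*_{\mathbf{e}}+\psi_{\mathbf{f}}\psi^*_{\mathbf{f}}+\psi_{\mathbf{g}}\psi^*_{\mathbf{g}}+\psi_{\mathbf{h}}\psi^*_{\mathbf{h}})(y).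 \]
   Context: $\mathcal{R}$ is a commutative ring with identity equipped with an involutive ring automorphism $*$. It is extended to $\mathcal{R}[x^{\pm1}]$ by acting on coefficients and $x\mapsto x^{-1}$, and to $\mathcal{R}[x^{\pm1},y^{\pm1}]$ by acting on coefficients, $x\mapsto x^{-1}$, $y\mapsto y^{-1}$; $f^*$ denotes the image of $f$. For $\mathbf{a}=(a_0,\dots,a_{l-1})\in\mathcal{R}^l$: $\mathbf{a}^*=(a_{l-1}^*,\dots,a_0^* )$, $\phi_{\mathbf{a}}(x)=\sum_{i=0}^{l-1}a_ix^i$, and $\psi_{\mathbf{a}}(x)=x^{1-l}\phi_{\mathbf{a}}(x^2)$. Vectors in $\mathcal{R}^k$ are $1\times k$ matrices, $t$ is transpose, so $\mathbf{u}^t\mathbf{v}$ is the $m\times n$ outer product. For $A\in\mathcal{R}^{m\times n}$ with rows $\mathbf{a}_0,\dots,\mathbf{a}_{m-1}$, $\psi_A(x,y)=\sum_{i=0}^{m-1}\psi_{\mathbf{a}_i}(x)\,y^{2i+1-m}$. *)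

From HB Require Import structures.
From mathcomp Require Import all_boot all_order all_algebra.
Set Implicit Arguments. Unset Strict Implicit. Unset Printing Implicit Defensive.
Import Order.TTheory GRing.Theory Num.Theory.
Local Open Scope ring_scope.

(* The Laurent polynomial ring R[x^{+-1}, y^{+-1}] is modelled as formal
   finite sums of monomials c x^i y^j, given as lists of (c, (i, j)) with
   i j : int.  Two formal sums denote the same Laurent polynomial iff all
   their coefficients agree (lcoef), see [leqL]. *)
Definition laurent2 (R : Type) := seq (R * (int * int)).

Section Laurent.
Variable R : comPzRingType.

Definition lcoef (p : laurent2 R) (i j : int) : R :=
  \sum_(t <- p | t.2 == (i, j)) t.1.

Definition leqL (p q : laurent2 R) : Prop :=
  forall i j : int, lcoef p i j = lcoef q i j.

Definition laddL (p q : laurent2 R) : laurent2 R := p ++ q.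

Definition lmulL (p q : laurent2 R) : laurent2 R :=
  [seq (s.1 * t.1, (s.2.1 + t.2.1, s.2.2 + t.2.2)) | s <- p, t <- q].

Definition lstarL (star : R -> R) (p : laurent2 R) : laurent2 R :=
  [seq (star t.1, (- t.2.1, - t.2.2)) | t <- p].

Definition vstar (star : R -> R) (l : nat) (a : 'rV[R]_l) : 'rV[R]_l :=
  \row_(i < l) star (a 0 (rev_ord i)).

(* psi_a(x) = x^{1-l} phi_a(x^2) = sum_i a_i x^{2i+1-l}, as element of
   R[x^{+-1}] embedded in R[x^{+-1},y^{+-1}] (y-exponent 0) *)
Definition psix (l : nat) (a : 'rV[R]_l) : laurent2 R :=
  [seq (a 0 i, (2%:Z * (nat_of_ord i)%:Z + 1 - l%:Z, 0%:Z)) | i <- enum 'I_l].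

Definition psiy (l : nat) (a : 'rV[R]_l) : laurent2 R :=
  [seq (a 0 i, (0%:Z, 2%:Z * (nat_of_ord i)%:Z + 1 - l%:Z)) | i <- enum 'I_l].

(* psi_A(x,y) = sum_i psi_{a_i}(x) y^{2i+1-m}, a_i the rows of A *)
Definition psiM (m n : nat) (A : 'M[R]_(m, n)) : laurent2 R :=
  flatten [seq lmulL (psix (row i A))
                 [:: (1, (0%:Z, 2%:Z * (nat_of_ord i)%:Z + 1 - m%:Z))]
          | i <- enum 'I_m].

Definition lnormL (star : R -> R) (p : laurent2 R) : laurent2 R :=
  lmulL p (lstarL star p).

End Laurent.

(* The rank-one matrix u^t v has psi_{u^t v}(x, y) = psi_u(y) psi_v(x), psi_A
   is additive in A, and psi_{a^*} = (psi_a)^*.  Hence psi_Q, psi_R, psi_S,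
   psi_T are the four components of a quaternion-like product of
   (psi_a, psi_b, psi_c, psi_d)(x) and (psi_e, psi_f, psi_g, psi_h)(y), and the
   claim becomes a polynomial identity in the commutative ring
   R[x^{+-1}, y^{+-1}] once * is distributed over sums and products: the cross
   terms cancel in pairs, as in the multiplicativity of the quaternion norm.
   Formal sums modulo [leqL] form a setoid ring, so [ring] checks that identity. *)
From HB Require Import structures.
From mathcomp Require Import all_boot all_order all_algebra.
From Stdlib Require Import Setoid Morphisms Ring_theory Ring.
From mathcomp Require Import zify.
Import GRing.Theory.
Local Open Scope ring_scope.
Set Implicit Arguments. Unset Strict Implicit.

Local Infix "+L" := laddL (at level 50, left associativity).
Local Infix "*L" := lmulL (at level 40, left associativity).

Section LaurentRing.
Variable R : comPzRingType.
Local Notation L := (laurent2 R).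

Definition loppL (p : L) : L := [seq (- t.1, t.2) | t <- p].
Definition lsubL (p q : L) : L := p +L loppL q.
Definition lzeroL : L := [::].
Definition loneL : L := [:: (1, (0%:Z, 0%:Z))].

Lemma lcoef_add (p q : L) i j : lcoef (p +L q) i j = lcoef p i j + lcoef q i j.
Proof. by rewrite /lcoef big_cat. Qed.

Lemma lcoef_flatten (s : seq L) i j :
  lcoef (flatten s) i j = \sum_(p <- s) lcoef p i j.
Proof.
elim: s => [|p s IHs]; first by rewrite big_nil /lcoef big_nil.
by rewrite /= -[_ ++ _]/(_ +L _) lcoef_add IHs big_cons.
Qed.

Lemma lcoef_zero i j : lcoef lzeroL i j = 0.
Proof. by rewrite /lcoef big_nil. Qed.

Lemma lcoef_opp (p : L) i j : lcoef (loppL p) i j = - lcoef p i j.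
Proof. by rewrite /lcoef big_map sumrN. Qed.

Lemma lcoef_mull (p q : L) i j :
  lcoef (p *L q) i j = \sum_(s <- p) s.1 * lcoef q (i - s.2.1) (j - s.2.2).
Proof.
rewrite /lmulL; elim: p => [|s p IHp]; first by rewrite /lcoef !big_nil.
rewrite allpairs_cons -[_ ++ _]/(_ +L _) lcoef_add IHp big_cons; congr (_ + _).
rewrite /lcoef big_map mulr_sumr; apply: congr_big => // -[c [a b]] /=.
rewrite -pair_eqE /= [a == _]eq_sym [b == _]eq_sym !subr_eq.
by rewrite [i == _]eq_sym [j == _]eq_sym (addrC a) (addrC b).
Qed.

Lemma lcoef_mulr (p q : L) i j :
  lcoef (p *L q) i j = \sum_(t <- q) lcoef p (i - t.2.1) (j - t.2.2) * t.1.
Proof.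
rewrite lcoef_mull /lcoef.
under eq_bigr do rewrite mulr_sumr big_mkcond.
rewrite exchange_big /=; apply: eq_bigr => -[d [a' b']] _.
rewrite mulr_suml [RHS]big_mkcond; apply: eq_bigr => -[c [a b]] _ /=.
have eq_subC (x y k : int) : (x == k - y) = (y == k - x).
  by rewrite eq_sym subr_eq [RHS]eq_sym subr_eq addrC.
by rewrite !xpair_eqE [a' == _]eq_subC [b' == _]eq_subC; case: ifP.
Qed.

#[export] Instance leqL_equiv : Equivalence (@leqL R).
Proof.
split; first by move=> p i j.
  by move=> p q Hpq i j; rewrite Hpq.
by move=> p q r Hpq Hqr i j; rewrite Hpq Hqr.
Qed.

Lemma laddL_ext (p p' q q' : L) :
  leqL p p' -> leqL q q' -> leqL (p +L q) (p' +L q').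
Proof. by move=> Hp Hq i j; rewrite !lcoef_add Hp Hq. Qed.

Lemma loppL_ext (p p' : L) : leqL p p' -> leqL (loppL p) (loppL p').
Proof. by move=> Hp i j; rewrite !lcoef_opp Hp. Qed.

Lemma lmulL_ext (p p' q q' : L) :
  leqL p p' -> leqL q q' -> leqL (p *L q) (p' *L q').
Proof.
move=> Hp Hq i j; rewrite lcoef_mulr.
under eq_bigr do rewrite Hp.
by rewrite -lcoef_mulr !lcoef_mull; apply: eq_bigr => s _; rewrite Hq.
Qed.

Lemma laurent2_ring_theory :
  ring_theory lzeroL loneL (@laddL R) (@lmulL R) lsubL loppL (@leqL R).
Proof.
split.
- by move=> p i j; rewrite lcoef_add lcoef_zero add0r.
- by move=> p q i j; rewrite !lcoef_add addrC.
- by move=> p q r i j; rewrite !lcoef_add addrA.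
- by move=> p i j; rewrite lcoef_mull big_seq1 /= !subr0 mul1r.
- move=> p q i j; rewrite lcoef_mull lcoef_mulr.
  by apply: eq_bigr => s _; rewrite mulrC.
- move=> p q r i j; rewrite [LHS]lcoef_mull [RHS]lcoef_mulr.
  under eq_bigr do rewrite lcoef_mulr mulr_sumr.
  under [RHS]eq_bigr do rewrite lcoef_mull mulr_suml.
  rewrite exchange_big /=; apply: eq_bigr => s _; apply: eq_bigr => t _.
  by rewrite mulrA (addrAC i) (addrAC j).
- move=> p q r i j.
  by rewrite /laddL lcoef_mull big_cat /= !lcoef_add -!lcoef_mull.
- by [].
- by move=> p i j; rewrite /lsubL lcoef_add lcoef_opp subrr lcoef_zero.
Qed.

Lemma laurent2_ring_ext : ring_eq_ext (@laddL R) (@lmulL R) loppL (@leqL R).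
Proof.
split=> [p p' Hp q q' Hq | p p' Hp q q' Hq | p p' Hp].
- exact: laddL_ext.
- exact: lmulL_ext.
- exact: loppL_ext.
Qed.

Add Ring laurent2_ring : laurent2_ring_theory (setoid leqL_equiv laurent2_ring_ext).

#[export] Instance laddL_Proper :
  Proper (@leqL R ==> @leqL R ==> @leqL R) (@laddL R).
Proof. by move=> ? ? Hp ? ? Hq; apply: laddL_ext. Qed.

#[export] Instance lmulL_Proper :
  Proper (@leqL R ==> @leqL R ==> @leqL R) (@lmulL R).
Proof. by move=> ? ? Hp ? ? Hq; apply: lmulL_ext. Qed.

#[export] Instance loppL_Proper : Proper (@leqL R ==> @leqL R) loppL.
Proof. by move=> ? ? Hp; apply: loppL_ext. Qed.

Section Involution.
Variable star : {rmorphism R -> R}.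

Lemma lcoef_star (p : L) i j :
  lcoef (lstarL star p) i j = star (lcoef p (- i) (- j)).
Proof.
rewrite /lcoef /lstarL big_map rmorph_sum; apply: congr_big => // -[c [a b]] /=.
by rewrite !xpair_eqE !eqr_oppLR.
Qed.

#[export] Instance lstarL_Proper : Proper (@leqL R ==> @leqL R) (lstarL star).
Proof. by move=> p p' Hp i j; rewrite !lcoef_star Hp. Qed.

Lemma lstarL_add (p q : L) :
  leqL (lstarL star (p +L q)) (lstarL star p +L lstarL star q).
Proof. by move=> i j; rewrite lcoef_add !lcoef_star lcoef_add rmorphD. Qed.

Lemma lstarL_opp (p : L) : leqL (lstarL star (loppL p)) (loppL (lstarL star p)).
Proof. by move=> i j; rewrite lcoef_opp !lcoef_star lcoef_opp rmorphN. Qed.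

Lemma lstarL_mul (p q : L) :
  leqL (lstarL star (p *L q)) (lstarL star p *L lstarL star q).
Proof.
move=> i j; rewrite lcoef_star !lcoef_mull rmorph_sum /lstarL big_map.
apply: eq_bigr => s _.
by rewrite rmorphM /= -/(lstarL star q) lcoef_star !opprK !opprD.
Qed.

Hypothesis starK : involutive star.

Lemma lstarLK (p : L) : leqL (lstarL star (lstarL star p)) p.
Proof. by move=> i j; rewrite !lcoef_star starK !opprK. Qed.

Lemma lnormL_quaternion (pa pb pc pd qe qf qg qh : L) :
  let s := lstarL star in
  leqL (lnormL star (s qf *L pa +L qg *L pc +L loppL (qe *L s pb) +L qh *L pd)
        +L lnormL star (s qf *L pb +L s qg *L pd +L qe *L s pa +L loppL (s qh *L pc))
        +L lnormL star (s qg *L pa +L loppL (qf *L pc) +L loppL (qh *L pb)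
                          +L loppL (qe *L s pd))
        +L lnormL star (qg *L pb +L loppL (qf *L pd) +L s qh *L pa +L qe *L s pc))
       ((lnormL star pa +L lnormL star pb +L lnormL star pc +L lnormL star pd)
        *L (lnormL star qe +L lnormL star qf +L lnormL star qg +L lnormL star qh)).
Proof.
rewrite /lnormL.
repeat setoid_rewrite lstarL_add; repeat setoid_rewrite lstarL_opp.
repeat setoid_rewrite lstarL_mul; repeat setoid_rewrite lstarLK.
ring.
Qed.

End Involution.
End LaurentRing.

Section Psi.
Variable R : comPzRingType.

Definition psi_exp (l : nat) (i : 'I_l) : int := 2%:Z * (nat_of_ord i)%:Z + 1 - l%:Z.

Lemma psi_exp_rev l (i : 'I_l) : psi_exp (rev_ord i) = - psi_exp i.
Proof. by have := ltn_ord i; rewrite /psi_exp /=; lia. Qed.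

Lemma lcoef_psix l (v : 'rV[R]_l) i j :
  lcoef (psix v) i j =
  \sum_(k < l) (if (psi_exp k == i) && (0%:Z == j) then v 0 k else 0).
Proof. by rewrite /lcoef /psix big_map big_enum_cond /= big_mkcond. Qed.

Lemma lcoef_psiy l (v : 'rV[R]_l) i j :
  lcoef (psiy v) i j =
  \sum_(k < l) (if (0%:Z == i) && (psi_exp k == j) then v 0 k else 0).
Proof. by rewrite /lcoef /psiy big_map big_enum_cond /= big_mkcond. Qed.

Lemma lcoef_psiM m n (A : 'M[R]_(m, n)) i j :
  lcoef (psiM A) i j =
  \sum_(k < m) \sum_(l < n)
    (if (psi_exp l == i) && (0%:Z == j - psi_exp k) then A k l else 0).
Proof.
rewrite /psiM lcoef_flatten big_map big_enum /=; apply: eq_bigr => k _.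
rewrite lcoef_mulr big_seq1 /= mulr1 subr0 lcoef_psix.
by apply: eq_bigr => l _; rewrite mxE.
Qed.

Lemma psiM_add m n (A B : 'M[R]_(m, n)) :
  leqL (psiM (A + B)) (psiM A +L psiM B).
Proof.
move=> i j; rewrite lcoef_add !lcoef_psiM -big_split.
apply: eq_bigr => k _; rewrite -big_split; apply: eq_bigr => l _.
by rewrite mxE /=; case: ifP; rewrite ?addr0.
Qed.

Lemma psiM_opp m n (A : 'M[R]_(m, n)) : leqL (psiM (- A)) (loppL (psiM A)).
Proof.
move=> i j; rewrite lcoef_opp !lcoef_psiM -sumrN; apply: eq_bigr => k _.
by rewrite -sumrN; apply: eq_bigr => l _; rewrite mxE; case: ifP; rewrite ?oppr0.
Qed.

Lemma psiM_outer m n (u : 'rV[R]_m) (v : 'rV[R]_n) :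
  leqL (psiM (u^T *m v)) (psiy u *L psix v).
Proof.
move=> i j; rewrite lcoef_psiM lcoef_mull /psiy big_map big_enum /=.
apply: eq_bigr => k _; rewrite subr0 lcoef_psix mulr_sumr; apply: eq_bigr => l _.
by rewrite !mxE big_ord1 !mxE; case: ifP; rewrite ?mulr0.
Qed.

Variable star : {rmorphism R -> R}.

Lemma psix_vstar l (v : 'rV[R]_l) :
  leqL (psix (vstar star v)) (lstarL star (psix v)).
Proof.
move=> i j; rewrite lcoef_star !lcoef_psix rmorph_sum (reindex_inj rev_ord_inj).
apply: eq_bigr => k _; rewrite psi_exp_rev eqr_oppLR.
rewrite [0%:Z == - _]eq_sym oppr_eq0 [_ == 0%:Z]eq_sym /vstar mxE rev_ordK.
by case: ifP; rewrite ?rmorph0.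
Qed.

Lemma psiy_vstar l (v : 'rV[R]_l) :
  leqL (psiy (vstar star v)) (lstarL star (psiy v)).
Proof.
move=> i j; rewrite lcoef_star !lcoef_psiy rmorph_sum (reindex_inj rev_ord_inj).
apply: eq_bigr => k _; rewrite psi_exp_rev eqr_oppLR.
rewrite [0%:Z == - _]eq_sym oppr_eq0 [_ == 0%:Z]eq_sym /vstar mxE rev_ordK.
by case: ifP; rewrite ?rmorph0.
Qed.

End Psi.

Theorem lemma3p1 (R : comPzRingType) (star : {rmorphism R -> R})
  (star_invol : involutive star) (n m : nat)
  (a b c d : 'rV[R]_n) (e f g h : 'rV[R]_m) :
  let st := vstar star in
  let Q := (st _ f)^T *m a + g^T *m c - e^T *m st _ b + h^T *m d in
  let R' := (st _ f)^T *m b + (st _ g)^T *m d + e^T *m st _ a - (st _ h)^T *m c in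
  let S := (st _ g)^T *m a - f^T *m c - h^T *m b - e^T *m st _ d in
  let T := g^T *m b - f^T *m d + (st _ h)^T *m a + e^T *m st _ c in
  leqL
    (laddL (laddL (laddL (lnormL star (psiM Q)) (lnormL star (psiM R')))
                  (lnormL star (psiM S))) (lnormL star (psiM T)))
    (lmulL
      (laddL (laddL (laddL (lnormL star (psix a)) (lnormL star (psix b)))
                    (lnormL star (psix c))) (lnormL star (psix d)))
      (laddL (laddL (laddL (lnormL star (psiy e)) (lnormL star (psiy f)))
                    (lnormL star (psiy g))) (lnormL star (psiy h)))).
Proof.
move=> st Q R' S T.
pose Y := @psiy R m; pose X := @psix R n.
have psiQ : leqL (psiM Q)
    (Y (st _ f) *L X a +L Y g *L X c +L loppL (Y e *L X (st _ b)) +L Y h *L X d).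
  by move=> i j; rewrite !(psiM_add, psiM_opp, psiM_outer, lcoef_add, lcoef_opp).
have psiR : leqL (psiM R')
    (Y (st _ f) *L X b +L Y (st _ g) *L X d +L Y e *L X (st _ a)
       +L loppL (Y (st _ h) *L X c)).
  by move=> i j; rewrite !(psiM_add, psiM_opp, psiM_outer, lcoef_add, lcoef_opp).
have psiS : leqL (psiM S)
    (Y (st _ g) *L X a +L loppL (Y f *L X c) +L loppL (Y h *L X b)
       +L loppL (Y e *L X (st _ d))).
  by move=> i j; rewrite !(psiM_add, psiM_opp, psiM_outer, lcoef_add, lcoef_opp).
have psiT : leqL (psiM T)
    (Y g *L X b +L loppL (Y f *L X d) +L Y (st _ h) *L X a +L Y e *L X (st _ c)).
  by move=> i j; rewrite !(psiM_add, psiM_opp, psiM_outer, lcoef_add, lcoef_opp).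
rewrite /lnormL; setoid_rewrite psiQ; setoid_rewrite psiR.
setoid_rewrite psiS; setoid_rewrite psiT; rewrite /X /Y /st.
repeat setoid_rewrite psix_vstar; repeat setoid_rewrite psiy_vstar.
exact: lnormL_quaternion.
Qed.
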